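(* Let $x,x'$ be i.i.d. random elements of $\mathcal X$ and let $f,f^*:\mathcal X\to\mathbb R^r$ be measurable with $\mathbb E\|f(x)\|_2^4<\infty$ and $\mathbb E\|f^*(x)\|_2^4<\infty$. Suppose $\mathbb E[f(x)f^*(x)^T]=\mathbb E[f^*(x)f(x)^T]$ and this matrix is positive semidefinite. Then $$\mathbb E\big[\big(f(x)^Tf(x')-f^*(x)^Tf^*(x')\big)^2\big]\ge(2\sqrt2-2)\,\sigma_{\min}\big(\mathbb E[f^*(x)f^*(x)^T]\big)\,\mathbb E\big[\|f^*(x)-f(x)\|_2^2\big].$$
   Context: $\sigma_{\min}(M)$ denotes the smallest singular value of a matrix $M$. *)

From HB Require Import structures.
From mathcomp Require Import all_boot all_order all_algebra.
From mathcomp Require Import all_classical all_reals all_analysis.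
Set Implicit Arguments. Unset Strict Implicit. Unset Printing Implicit Defensive.
Import Order.TTheory GRing.Theory Num.Theory.
Local Open Scope ring_scope.
Local Open Scope classical_set_scope.

(* Vectors of R^r are row vectors 'rV[R]_r. *)

Definition sqnorm (R : realType) (r : nat) (v : 'rV[R]_r) : R :=
  \sum_(i < r) v 0 i ^+ 2.

Definition dotv (R : realType) (r : nat) (u v : 'rV[R]_r) : R :=
  \sum_(i < r) u 0 i * v 0 i.

Definition sigma_min (R : realType) (r : nat) (M : 'M[R]_r) : R :=
  Num.sqrt (inf [set a : R | eigenvalue (M^T *m M) a]).

Definition Emat d (X : measurableType d) (R : realType) (P : probability X R)
  (r : nat) (f g : X -> 'rV[R]_r) : 'M[R]_r :=
  \matrix_(i, j) Rintegral P setT (fun x => f x 0 i * g x 0 j).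

Definition measurable_vec d (X : measurableType d) (R : realType) (r : nat)
  (f : X -> 'rV[R]_r) : Prop :=
  forall i : 'I_r, measurable_fun setT (fun x => f x 0 i).

Definition psd (R : realType) (r : nat) (M : 'M[R]_r) : Prop :=
  forall v : 'rV[R]_r, 0 <= (v *m M *m v^T) 0 0.

From HB Require Import structures.
From mathcomp Require Import all_boot all_order all_algebra.
From mathcomp Require Import all_classical all_reals all_analysis.
From mathcomp Require Import measurable_realfun lra ring.
Import Order.TTheory GRing.Theory Num.Theory.
Import numFieldTopology.Exports numFieldNormedType.Exports.
Set Implicit Arguments. Unset Strict Implicit. Unset Printing Implicit Defensive.
Local Open Scope ring_scope.
Local Open Scope classical_set_scope.

(* Write A = E[f f^T], C = E[f fs^T] = E[fs f^T] (psd by hypothesis),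
   B = E[fs fs^T] and D = E[(fs - f)(fs - f)^T] = A - 2C + B, and let
   <M, N> = sum_ij M_ij N_ij be the Frobenius pairing.  The proof has four steps.
   1. Stacking w = (f, fs) turns f(x).f(x') - fs(x).fs(x') into a signed inner
      product sum_k s_k w_k(x) w_k(x'); Tonelli and linearity of expectation
      then give E[(f(x).f(x') - fs(x).fs(x'))^2] = |A|^2 - 2|C|^2 + |B|^2
      ([integral_dotv_gap]).
   2. With t = sqrt 2 - 1, so that t^2 = 1 - 2t, the entrywise identity
      a^2 - 2c^2 + b^2 = (a - c - t(b - c))^2 + 2(1-t) c d + 2t b d
      (d = a - 2c + b) yields
      |A|^2 - 2|C|^2 + |B|^2 >= 2(1-t)<C,D> + 2t<B,D>   ([frob_gap]).
   3. <M, D> = E[(fs - f) M (fs - f)^T], so <C, D> >= 0 since C is psd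
      ([Rintegral_bf]).
   4. B is a symmetric psd second-moment matrix, so by a Rayleigh-quotient
      argument sigma_min(B) |v|^2 <= v B v^T ([sigma_min_psd]), whence
      <B, D> >= sigma_min(B) E|fs - f|^2   ([Rintegral_sigma_min]). *)

Definition frob {R : pzRingType} {m n : nat} (M N : 'M[R]_(m, n)) : R :=
  \sum_i \sum_j M i j * N i j.

Lemma frobC (R : comPzRingType) (m n : nat) (M N : 'M[R]_(m, n)) :
  frob M N = frob N M.
Proof. by apply: eq_bigr => i _; apply: eq_bigr => j _; rewrite mulrC. Qed.

Lemma frob_gap (R : realFieldType) (m n : nat) (A B C : 'M[R]_(m, n)) (t : R) :
  t ^+ 2 = 1 - 2 * t ->
  2 * (1 - t) * frob C (A - 2 *: C + B) + 2 * t * frob B (A - 2 *: C + B)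
    <= frob A A - 2 * frob C C + frob B B.
Proof.
move=> ht; rewrite /frob !mulr_sumr -!sumrB -!big_split /=.
apply: ler_sum => i _; rewrite !mulr_sumr -!sumrB -!big_split /=.
apply: ler_sum => j _; rewrite !mxE.
set a := A i j; set b := B i j; set c := C i j.
have gap : a * a - 2 * (c * c) + b * b
    - (2 * (1 - t) * (c * (a - 2 * c + b)) + 2 * t * (b * (a - 2 * c + b)))
  = (a - c - t * (b - c)) ^+ 2 + (1 - 2 * t - t ^+ 2) * (b - c) ^+ 2 by ring.
rewrite ht subrr mul0r addr0 in gap.
by rewrite -subr_ge0 gap sqr_ge0.
Qed.

Section QuadraticForms.
Variables (R : realType) (n : nat).
Implicit Types (M : 'M[R]_n) (c u v w : 'rV[R]_n) (a m : R).

(* The bilinear form (u, w) |-> u M w^T and its quadratic form; [psd M] is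
   literally nonnegativity of [qf M]. *)
Definition bf M u w : R := (u *m M *m w^T) 0 0.
Definition qf M v : R := bf M v v.

Lemma bfE M u w : bf M u w = \sum_i \sum_j M i j * (u 0 i * w 0 j).
Proof.
rewrite /bf mxE [RHS]exchange_big; apply: eq_bigr => j _.
rewrite !mxE mulr_suml; apply: eq_bigr => i _; rewrite ?mxE; ring.
Qed.

Lemma bfC M u w : M^T = M -> bf M w u = bf M u w.
Proof.
move=> sM; rewrite /bf -[in LHS](trmxK (w *m M *m u^T)) mxE.
by rewrite !trmx_mul trmxK sM mulmxA.
Qed.

Lemma bfZl M a u w : bf M (a *: u) w = a * bf M u w.
Proof.
rewrite !bfE mulr_sumr; apply: eq_bigr => i _.
by rewrite mulr_sumr; apply: eq_bigr => j _; rewrite mxE; ring.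
Qed.

Lemma bfZr M a u w : bf M u (a *: w) = a * bf M u w.
Proof.
rewrite !bfE mulr_sumr; apply: eq_bigr => i _.
by rewrite mulr_sumr; apply: eq_bigr => j _; rewrite mxE; ring.
Qed.

Lemma bfDl M u v w : bf M (u + v) w = bf M u w + bf M v w.
Proof.
rewrite !bfE -big_split /=; apply: eq_bigr => i _.
by rewrite -big_split /=; apply: eq_bigr => j _; rewrite !mxE; ring.
Qed.

Lemma bfDr M u v w : bf M u (v + w) = bf M u v + bf M u w.
Proof.
rewrite !bfE -big_split /=; apply: eq_bigr => i _.
by rewrite -big_split /=; apply: eq_bigr => j _; rewrite !mxE; ring.
Qed.

Lemma bfBl M1 M2 u w : bf (M1 - M2) u w = bf M1 u w - bf M2 u w.
Proof.
rewrite !bfE -sumrB; apply: eq_bigr => i _.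
by rewrite -sumrB; apply: eq_bigr => j _; rewrite !mxE; ring.
Qed.

Lemma bf_mul M u w : bf M u w = bf 1%:M (u *m M) w.
Proof. by rewrite /bf mulmx1. Qed.

Lemma qf_scalar a v : qf a%:M v = a * sqnorm v.
Proof.
rewrite /qf bfE /sqnorm mulr_sumr; apply: eq_bigr => i _.
rewrite (bigD1 i) //= big1 => [|j /negbTE ji]; last by rewrite mxE eq_sym ji mul0r.
by rewrite mxE eqxx addr0 mulr1n expr2.
Qed.

Lemma sqnorm_qf v : sqnorm v = qf 1%:M v.
Proof. by rewrite qf_scalar mul1r. Qed.

Lemma qfD M u w : M^T = M -> qf M (u + w) = qf M u + qf M w + 2 * bf M u w.
Proof.
by move=> sM; rewrite /qf bfDl !bfDr (bfC u w sM); ring.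
Qed.

Lemma qfZ M a v : qf M (a *: v) = a ^+ 2 * qf M v.
Proof. by rewrite /qf bfZl bfZr mulrA expr2. Qed.

Lemma qfB M1 M2 v : qf (M1 - M2) v = qf M1 v - qf M2 v.
Proof. exact: bfBl. Qed.

Lemma qf_eigen M a v : v *m M = a *: v -> qf M v = a * sqnorm v.
Proof. by move=> e; rewrite /qf bf_mul e bfZl sqnorm_qf. Qed.

Lemma sqnormZ a v : sqnorm (a *: v) = a ^+ 2 * sqnorm v.
Proof. by rewrite !sqnorm_qf qfZ. Qed.

Lemma sqnorm_ge0 v : 0 <= sqnorm v.
Proof. by apply: sumr_ge0 => i _; rewrite sqr_ge0. Qed.

Lemma sqnorm_eq0 v : (sqnorm v == 0) = (v == 0).
Proof.
apply/idP/eqP => [|->]; last by rewrite /sqnorm big1 // => i _; rewrite mxE expr0n.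
rewrite /sqnorm psumr_eq0 => [/allP v0|i _]; last exact: sqr_ge0.
apply/rowP => i; rewrite mxE; apply/eqP; rewrite -sqrf_eq0.
exact: (implyP (v0 i (mem_index_enum _))).
Qed.

Lemma sqnorm0 : sqnorm (0 : 'rV[R]_n) = 0.
Proof. by apply/eqP; rewrite sqnorm_eq0. Qed.

Lemma sqnorm_coord v i : v 0 i ^+ 2 <= sqnorm v.
Proof.
rewrite /sqnorm (bigD1 i) //= lerDl; apply: sumr_ge0 => j _; exact: sqr_ge0.
Qed.

Lemma sqnorm_normalize v : v != 0 -> sqnorm ((Num.sqrt (sqnorm v))^-1 *: v) = 1.
Proof.
rewrite -sqnorm_eq0 => v0.
by rewrite sqnormZ exprVn sqr_sqrtr ?sqnorm_ge0 // mulVf.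
Qed.

(* Continuity and compactness needed to minimize the form on the unit sphere. *)
Lemma qf_continuous M : continuous (qf M).
Proof.
have -> : qf M = fun w => \sum_i \sum_j M i j * (w 0 i * w 0 j).
  by apply/funext => w; rewrite /qf bfE.
apply: continuous_big => [|i _]; first exact: add_continuous.
apply: continuous_big => [|j _]; first exact: add_continuous.
move=> w; apply: (continuousM (s := fun=> M i j)
  (t := fun x : 'rV[R]_n => x 0 i * x 0 j)); first exact: cst_continuous.
by apply: (continuousM (s := fun x : 'rV[R]_n => x 0 i)
  (t := fun x : 'rV[R]_n => x 0 j)); exact: coord_continuous.
Qed.

Lemma unit_sphere_compact : compact [set w : 'rV[R]_n | sqnorm w = 1].
Proof.
apply: (@subclosed_compact _ _
  [set w : 'rV[R]_n | forall i, `[(-1:R), 1]%classic (w ord0 i)]).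
- have -> : [set w : 'rV[R]_n | sqnorm w = 1] = qf 1%:M @^-1` [set 1].
    by apply/seteqP; split => w /=; rewrite sqnorm_qf.
  apply: preimage_closed; last exact: closed_eq.
  by move=> w _; exact: qf_continuous.
- by apply: (@rV_compact _ _ (fun=> `[(-1:R), 1]%classic)) => i;
    exact: segment_compact.
- move=> w /= w1 i; have := sqnorm_coord w i; rewrite w1 => h.
  by rewrite /= in_itv /=; apply/andP; split; nra.
Qed.

Lemma rayleigh_min M v : v != 0 ->
  exists2 c, sqnorm c = 1 & forall w, qf M c * sqnorm w <= qf M w.
Proof.
move=> v0; have [c /set_mem c1 cmin] := EVT_min_rV
  (ex_intro _ _ (sqnorm_normalize v0)) unit_sphere_compact
  (continuous_subspaceT (qf_continuous (M:=M))).
exists c => // w; have [->|w0] := eqVneq w 0.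
  by rewrite sqnorm0 mulr0 -(scale0r (0 : 'rV[R]_n)) qfZ expr0n mul0r.
have := cmin _ (mem_set (sqnorm_normalize w0)).
rewrite qfZ exprVn sqr_sqrtr ?sqnorm_ge0 // mulrC ler_pdivlMr //.
by rewrite lt_def sqnorm_eq0 w0 sqnorm_ge0.
Qed.

Lemma psd_qf_eq0 M c : M^T = M -> (forall w, 0 <= qf M w) ->
  qf M c = 0 -> c *m M = 0.
Proof.
move=> sM psdM qc; set y := c *m M; apply/eqP; rewrite -sqnorm_eq0.
rewrite eq_le sqnorm_ge0 andbT leNgt; apply/negP => ypos.
set Y := sqnorm y in ypos; set Q := qf M y.
have Q0 : 0 <= Q by exact: psdM.
have bfy a : bf M c (a *: y) = a * Y by rewrite bfZr bf_mul /Y sqnorm_qf.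
(* were y nonzero, the form would be negative at c + a y for this a *)
pose a := - Y / (Q + Y).
have := psdM (c + a *: y); rewrite qfD // qfZ qc bfy add0r.
have -> : a ^+ 2 * Q + 2 * (a * Y) = (Y / (Q + Y)) ^+ 2 * (- Q - 2 * Y).
  by rewrite /a; field; rewrite gt_eqF //; lra.
by rewrite pmulr_rge0 ?exprn_gt0 ?divr_gt0 //; lra.
Qed.

(* For a symmetric M, every nonnegative eigenvalue m bounds sigma_min M, as m^2
   is an eigenvalue of M^T M, whose eigenvalues are all nonnegative. *)
Lemma sigma_min_le_eigen M c m : M^T = M -> c != 0 -> c *m M = m *: c ->
  0 <= m -> sigma_min M <= m.
Proof.
move=> sM c0 eigc m0.
have eig2 : eigenvalue (M^T *m M) (m ^+ 2).
  by apply/eigenvalueP; exists c => //; rewrite sM mulmxA eigc -scalemxAl eigc scalerA.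
have lbE : has_lbound [set a : R | eigenvalue (M^T *m M) a].
  exists 0 => a /eigenvalueP [w ew w0].
  have e : sqnorm (w *m M^T) = a * sqnorm w.
    rewrite -(qf_eigen ew) sqnorm_qf /qf /bf mulmx1 trmx_mul trmxK.
    by rewrite !mulmxA.
  have := sqnorm_ge0 (w *m M^T); rewrite e pmulr_lge0 //.
  by rewrite lt_def sqnorm_eq0 w0 sqnorm_ge0.
apply: le_trans (ler_wsqrtr (ge_inf lbE eig2)) _.
by rewrite sqrtr_sqr ger0_norm.
Qed.

(* The smallest singular value of a positive semidefinite symmetric matrix
   bounds its quadratic form from below: a minimizer c of the Rayleigh quotient
   is an eigenvector, for the eigenvalue qf M c, by [psd_qf_eq0]. *)
Lemma sigma_min_psd M : M^T = M -> (forall w, 0 <= qf M w) ->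
  forall v, sigma_min M * sqnorm v <= qf M v.
Proof.
move=> sM psdM v; have [->|v0] := eqVneq v 0.
  by rewrite sqnorm0 mulr0 psdM.
have [c c1 cmin] := rayleigh_min M v0; set m := qf M c.
have psdMm w : 0 <= qf (M - m%:M) w by rewrite qfB qf_scalar subr_ge0.
have sMm : (M - m%:M)^T = M - m%:M by rewrite linearB /= tr_scalar_mx sM.
have qc : qf (M - m%:M) c = 0 by rewrite qfB qf_scalar c1 mulr1 subrr.
have eigc : c *m M = m *: c.
  have := psd_qf_eq0 sMm psdMm qc.
  by rewrite mulmxBr mul_mx_scalar => /eqP; rewrite subr_eq0 => /eqP.
have c0 : c != 0 by rewrite -sqnorm_eq0 c1 oner_neq0.
apply: le_trans (cmin v); rewrite ler_wpM2r ?sqnorm_ge0 //.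
exact: sigma_min_le_eigen sM c0 eigc (psdM c).
Qed.

End QuadraticForms.

Section SecondMoments.
Variables (d : measure_display) (X : measurableType d) (R : realType)
  (P : probability X R).

Local Notation E := (Rintegral P setT).
Local Notation Pint phi := (P.-integrable setT (EFin \o phi)).

Lemma Rintegral_EFin (phi : X -> R) : Pint phi ->
  (\int[P]_x (phi x)%:E = (E phi)%:E)%E.
Proof. by move=> iphi; rewrite /Rintegral fineK // integrable_fin_num. Qed.

Lemma Pint_sum (I : Type) (s : seq I) (F : I -> X -> R) :
  (forall k, Pint (F k)) -> Pint (fun x => \sum_(k <- s) F k x).
Proof.
move=> iF; have iS : P.-integrable setT (fun x => \sum_(k <- s) (F k x)%:E).
  by apply: integrable_sum => // k _; exact: iF.
by apply: eq_integrable iS => // x _; rewrite /= sumEFin.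
Qed.

Lemma Rintegral_sum (I : Type) (s : seq I) (F : I -> X -> R) :
  (forall k, Pint (F k)) -> E (fun x => \sum_(k <- s) F k x) = \sum_(k <- s) E (F k).
Proof.
move=> iF; apply: EFin_inj; rewrite -Rintegral_EFin; last exact: Pint_sum.
rewrite -sumEFin; under eq_integral do rewrite -sumEFin.
rewrite integral_sum //; apply: eq_bigr => k _; exact: Rintegral_EFin.
Qed.

Lemma Pint_scale (c : R) (phi : X -> R) : Pint phi -> Pint (fun x => c * phi x).
Proof. by move=> iphi; exact: eq_integrable (integrableZl _ c iphi). Qed.

Definition sqint (phi : X -> R) : Prop :=
  measurable_fun setT phi /\ Pint (fun x => phi x ^+ 2).

(* The product of two L^2 variables is integrable: |ab| <= a^2 + b^2. *)
Lemma Pint_mul (a b : X -> R) : sqint a -> sqint b -> Pint (fun x => a x * b x).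
Proof.
move=> [ma ia2] [mb ib2].
apply: le_integrable (integrableD _ ia2 ib2) => //.
  by apply/measurable_EFinP; exact: measurable_funM.
move=> x _ /=; rewrite lee_fin [X in _ <= X]ger0_norm ?addr_ge0 ?sqr_ge0 // ler_norml.
by apply/andP; split; nra.
Qed.

(* L^2 is stable under differences: (a - b)^2 <= 2 a^2 + 2 b^2. *)
Lemma sqint_sub (a b : X -> R) : sqint a -> sqint b -> sqint (fun x => a x - b x).
Proof.
move=> [ma ia2] [mb ib2]; split; first exact: measurable_funB.
apply: le_integrable (integrableD _ (Pint_scale 2 ia2) (Pint_scale 2 ib2)) => //.
  by apply/measurable_EFinP; apply: measurable_funX; exact: measurable_funB.
move=> x _ /=; rewrite lee_fin ger0_norm ?sqr_ge0 // [X in _ <= X]ger0_norm;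
  last by rewrite addr_ge0 // mulr_ge0 // sqr_ge0.
by have := sqr_ge0 (a x + b x); nra.
Qed.

Definition sqint_vec (n : nat) (u : X -> 'rV[R]_n) : Prop :=
  forall i, sqint (fun x => u x 0 i).

Lemma sqint_vec_sub (n : nat) (u v : X -> 'rV[R]_n) :
  sqint_vec u -> sqint_vec v -> sqint_vec (fun x => u x - v x).
Proof.
move=> su sv i; suff -> : (fun x => (u x - v x) 0 i) = fun x => u x 0 i - v x 0 i.
  exact: sqint_sub.
by apply/funext => x; rewrite !mxE.
Qed.

Lemma fourth_moment_sqint_vec (n : nat) (u : X -> 'rV[R]_n) :
  measurable_vec u -> (\int[P]_x ((sqnorm (u x)) ^+ 2)%:E < +oo)%E -> sqint_vec u.
Proof.
move=> mu u4 i.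
have m_sqnorm : measurable_fun setT (fun x => sqnorm (u x)).
  by apply: measurable_sum => j; exact: measurable_funX.
have i_sq4 : Pint (fun x => sqnorm (u x) ^+ 2).
  apply/integrableP; split; first by apply/measurable_EFinP; exact: measurable_funX.
  apply: le_lt_trans u4; rewrite le_eqVlt; apply/orP; left; apply/eqP.
  by apply: eq_integral => x _; rewrite /comp gee0_abs // lee_fin sqr_ge0.
have i_sq2 : Pint (fun x => sqnorm (u x)).
  apply: le_integrable (integrableD _
    (finite_measure_integrable_cst P 1 measurableT) i_sq4) => //.
    exact/measurable_EFinP.
  move=> x _ /=; have s0 := sqnorm_ge0 (u x).
  by rewrite lee_fin !ger0_norm ?addr_ge0 ?sqr_ge0 //; nra.
split; first exact: mu.
apply: le_integrable i_sq2 => //; first by apply/measurable_EFinP; exact: measurable_funX.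
move=> x _ /=; rewrite lee_fin !ger0_norm ?sqr_ge0 ?sqnorm_ge0 //.
exact: sqnorm_coord.
Qed.

Section BilinearForms.
Variables (n : nat) (u v : X -> 'rV[R]_n).
Hypotheses (su : sqint_vec u) (sv : sqint_vec v).

Lemma Pint_bf (M : 'M[R]_n) : Pint (fun x => bf M (u x) (v x)).
Proof.
apply: eq_integrable (Pint_sum _ (fun i => Pint_sum _ (fun j =>
  Pint_scale (M i j) (Pint_mul (su i) (sv j))))) => // x _ /=.
by rewrite bfE.
Qed.

Lemma Rintegral_bf (M : 'M[R]_n) :
  E (fun x => bf M (u x) (v x)) = frob M (Emat P u v).
Proof.
under eq_Rintegral do rewrite bfE.
rewrite Rintegral_sum => [|i]; last first.
  by apply: Pint_sum => j; exact: Pint_scale (Pint_mul (su i) (sv j)).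
apply: eq_bigr => i _; rewrite Rintegral_sum => [|j]; last first.
  exact: Pint_scale (Pint_mul (su i) (sv j)).
apply: eq_bigr => j _; rewrite RintegralZl ?mxE //.
exact: Pint_mul (su i) (sv j).
Qed.

End BilinearForms.

Lemma Pint_sqnorm (n : nat) (u : X -> 'rV[R]_n) :
  sqint_vec u -> Pint (fun x => sqnorm (u x)).
Proof.
move=> su; apply: eq_integrable (Pint_bf su su 1%:M) => // x _.
by rewrite /= -/(qf _ _) -sqnorm_qf.
Qed.

Lemma Rintegral_sigma_min (n : nat) (M : 'M[R]_n) (u : X -> 'rV[R]_n) :
  M^T = M -> (forall w, 0 <= qf M w) -> sqint_vec u ->
  sigma_min M * E (fun x => sqnorm (u x)) <= frob M (Emat P u u).
Proof.
move=> sM psdM su; rewrite -Rintegral_bf // -RintegralZl //; last exact: Pint_sqnorm.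
apply: le_Rintegral => //; first exact: Pint_scale (Pint_sqnorm su).
  exact: Pint_bf.
by move=> x _; exact: sigma_min_psd.
Qed.

Lemma Emat_tr (n : nat) (u v : X -> 'rV[R]_n) : (Emat P u v)^T = Emat P v u.
Proof.
by apply/matrixP => i j; rewrite !mxE; apply: eq_Rintegral => x _; rewrite mulrC.
Qed.

(* Second-moment matrices are positive semidefinite: w E[u^T u] w^T = E[(u.w)^2]. *)
Lemma Emat_psd (n : nat) (u : X -> 'rV[R]_n) : sqint_vec u ->
  forall w, 0 <= qf (Emat P u u) w.
Proof.
move=> su w; have -> : qf (Emat P u u) w = E (fun x => qf (w^T *m w) (u x)).
  rewrite Rintegral_bf // frobC /qf bfE; apply: eq_bigr => i _.
  by apply: eq_bigr => j _; rewrite !mxE big_ord1 !mxE mulrC.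
apply: Rintegral_ge0 => x _.
have -> : qf (w^T *m w) (u x) = sqnorm (u x *m w^T).
  by rewrite sqnorm_qf /qf /bf mulmx1 trmx_mul trmxK !mulmxA.
exact: sqnorm_ge0.
Qed.

Lemma EmatBl (n : nat) (u v w : X -> 'rV[R]_n) :
  sqint_vec u -> sqint_vec v -> sqint_vec w ->
  Emat P (fun x => u x - v x) w = Emat P u w - Emat P v w.
Proof.
move=> su sv sw; apply/matrixP => i j; rewrite !mxE -RintegralB //;
  try exact: Pint_mul.
by apply: eq_Rintegral => x _; rewrite !mxE mulrBl.
Qed.

Lemma EmatBr (n : nat) (u v w : X -> 'rV[R]_n) :
  sqint_vec u -> sqint_vec v -> sqint_vec w ->
  Emat P w (fun x => u x - v x) = Emat P w u - Emat P w v.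
Proof.
move=> su sv sw; rewrite -[LHS]trmxK Emat_tr EmatBl // linearB /=.
by rewrite !Emat_tr.
Qed.

End SecondMoments.

Definition sgn2 (R : pzRingType) (n : nat) : 'rV[R]_(n + n) :=
  row_mx (const_mx 1) (const_mx (-1)).

Lemma dotv_sub_row_mx (R : realType) (n : nat) (a b c e : 'rV[R]_n) :
  dotv a b - dotv c e =
  \sum_k sgn2 R n 0 k * (row_mx a c 0 k * row_mx b e 0 k).
Proof.
rewrite big_split_ord /dotv -sumrN; congr (_ + _); apply: eq_bigr => i _;
  by rewrite ?row_mxEl ?row_mxEr !mxE; ring.
Qed.

Lemma signed_block_sum (R : comPzRingType) (n : nat) (A B C D : 'M[R]_n) :
  \sum_k \sum_l sgn2 R n 0 k * sgn2 R n 0 l * block_mx A C D B k l ^+ 2 =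
  frob A A - frob C C - frob D D + frob B B.
Proof.
rewrite /frob -sumrB -sumrB -big_split /= big_split_ord /= -big_split /=.
apply: eq_bigr => i _; rewrite -sumrB -sumrB -big_split /=.
rewrite !big_split_ord /= -!big_split /=; apply: eq_bigr => j _.
rewrite block_mxEul block_mxEur block_mxEdl block_mxEdr !row_mxEl !row_mxEr.
by rewrite !mxE; ring.
Qed.

Section DoubleIntegral.
Variables (d : measure_display) (X : measurableType d) (R : realType)
  (P : probability X R).

Local Notation E := (Rintegral P setT).

Lemma Emat_row_mx (n : nat) (u v : X -> 'rV[R]_n) :
  Emat P (fun x => row_mx (u x) (v x)) (fun x => row_mx (u x) (v x)) =
  block_mx (Emat P u u) (Emat P u v) (Emat P v u) (Emat P v v).
Proof.
apply/matrixP => k l; rewrite -(fintype.splitK k) -(fintype.splitK l).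
case: (fintype.split k) => i; case: (fintype.split l) => j;
  rewrite /= ?block_mxEul ?block_mxEur ?block_mxEdl ?block_mxEdr !mxE;
  by apply: eq_Rintegral => x _; rewrite ?row_mxEl ?row_mxEr.
Qed.

Lemma sqint_vec_row_mx (n : nat) (u v : X -> 'rV[R]_n) :
  sqint_vec P u -> sqint_vec P v -> sqint_vec P (fun x => row_mx (u x) (v x)).
Proof.
move=> su sv k; rewrite -(fintype.splitK k); case: (fintype.split k) => i /=.
- suff -> : (fun x => row_mx (u x) (v x) 0 (lshift n i)) = fun x => u x 0 i.
    exact: su.
  by apply/funext => x; rewrite row_mxEl.
- suff -> : (fun x => row_mx (u x) (v x) 0 (rshift n i)) = fun x => v x 0 i.
    exact: sv.
  by apply/funext => x; rewrite row_mxEr.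
Qed.

(* Double integral of a squared signed kernel K(x, y) = sum_k s_k w_k(x) w_k(y)
   for independent copies x, y: by Tonelli and two applications of
   [Rintegral_bf] it equals sum_{k,l} s_k s_l E[w_k w_l]^2. *)
Lemma integral_sq_kernel (n : nat) (s : 'I_n -> R) (w : X -> 'rV[R]_n) :
  sqint_vec P w ->
  (\int[(P \x P)%E]_z ((\sum_k s k * (w z.1 0 k * w z.2 0 k)) ^+ 2)%:E =
   (\sum_k \sum_l s k * s l * Emat P w w k l ^+ 2)%:E)%E.
Proof.
move=> sw; set W := Emat P w w.
pose Mx x : 'M[R]_n := \matrix_(k, l) (s k * s l * (w x 0 k * w x 0 l)).
pose N : 'M[R]_n := \matrix_(k, l) (s k * s l * W k l).
have sq_kernel x y : (\sum_k s k * (w x 0 k * w y 0 k)) ^+ 2 = qf (Mx x) (w y).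
  rewrite /qf bfE expr2 mulr_suml; apply: eq_bigr => k _.
  by rewrite mulr_sumr; apply: eq_bigr => l _; rewrite mxE; ring.
have inner x : E (fun y => qf (Mx x) (w y)) = qf N (w x).
  rewrite Rintegral_bf // /frob /qf bfE; apply: eq_bigr => k _.
  by apply: eq_bigr => l _; rewrite !mxE; ring.
have mK : measurable_fun setT (fun z : X * X =>
    ((\sum_k s k * (w z.1 0 k * w z.2 0 k)) ^+ 2)%:E).
  apply/measurable_EFinP; apply: measurable_funX; apply: measurable_sum => k.
  apply: measurable_funM; first exact: measurable_cst.
  apply: measurable_funM.
  - exact: measurableT_comp (proj1 (sw k)) measurable_fst.
  - exact: measurableT_comp (proj1 (sw k)) measurable_snd.
rewrite (fubini_tonelli1 _ mK); last by move=> z; rewrite lee_fin sqr_ge0.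
transitivity (\int[P]_x (qf N (w x))%:E)%E.
  apply: eq_integral => x _; rewrite /fubini_F /=.
  under eq_integral do rewrite sq_kernel.
  by rewrite Rintegral_EFin ?inner //; exact: Pint_bf.
rewrite Rintegral_EFin; last exact: Pint_bf.
rewrite Rintegral_bf //; congr (_%:E); apply: eq_bigr => k _.
by apply: eq_bigr => l _; rewrite mxE expr2 mulrA.
Qed.

Lemma integral_dotv_gap (n : nat) (u v : X -> 'rV[R]_n) :
  sqint_vec P u -> sqint_vec P v ->
  (\int[(P \x P)%E]_z ((dotv (u z.1) (u z.2) - dotv (v z.1) (v z.2)) ^+ 2)%:E =
   (frob (Emat P u u) (Emat P u u) - frob (Emat P u v) (Emat P u v)
    - frob (Emat P v u) (Emat P v u) + frob (Emat P v v) (Emat P v v))%:E)%E.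
Proof.
move=> su sv; under eq_integral do rewrite dotv_sub_row_mx.
rewrite (@integral_sq_kernel _ (sgn2 R n 0) (fun x => row_mx (u x) (v x)));
  last exact: sqint_vec_row_mx.
by rewrite Emat_row_mx signed_block_sum.
Qed.

End DoubleIntegral.

Theorem mainTheorem15 (d : measure_display) (X : measurableType d)
  (R : realType) (P : probability X R) (r : nat)
  (f fs : X -> 'rV[R]_r) :
  measurable_vec f -> measurable_vec fs ->
  (\int[P]_x ((sqnorm (f x)) ^+ 2)%:E < +oo)%E ->
  (\int[P]_x ((sqnorm (fs x)) ^+ 2)%:E < +oo)%E ->
  Emat P f fs = Emat P fs f ->
  psd (Emat P f fs) ->
  (((2 * Num.sqrt 2 - 2) * sigma_min (Emat P fs fs))%:E
     * \int[P]_x (sqnorm (fs x - f x))%:E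
   <= \int[(P \x P)%E]_z ((dotv (f z.1) (f z.2) - dotv (fs z.1) (fs z.2)) ^+ 2)%:E)%E.
Proof.
move=> mf mfs f4 fs4 hC hpsd.
have sf := fourth_moment_sqint_vec mf f4; have sfs := fourth_moment_sqint_vec mfs fs4.
set A := Emat P f f; set C := Emat P f fs; set B := Emat P fs fs.
pose g x := fs x - f x; have sg : sqint_vec P g := sqint_vec_sub sfs sf.
have DE : Emat P g g = A - 2 *: C + B.
  rewrite EmatBl // !EmatBr // -hC; apply/matrixP => i j; rewrite !mxE; ring.
have CD : 0 <= frob C (Emat P g g).
  by rewrite -Rintegral_bf //; apply: Rintegral_ge0 => x _; exact: hpsd.
have BD := Rintegral_sigma_min (Emat_tr P fs fs) (Emat_psd sfs) sg.
rewrite (Rintegral_EFin (Pint_sqnorm sg)) integral_dotv_gap // -hC -EFinM lee_fin.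
pose t := Num.sqrt (2 : R) - 1.
have s2 : Num.sqrt (2 : R) ^+ 2 = 2 by rewrite sqr_sqrtr // ler0n.
have s2_ge0 : 0 <= Num.sqrt (2 : R) := sqrtr_ge0 2.
have t2 : t ^+ 2 = 1 - 2 * t by rewrite /t; nra.
have := frob_gap A B C t2; rewrite -DE => gap.
have h1 : 0 <= (1 - t) * frob C (Emat P g g) by rewrite mulr_ge0 // /t; nra.
have h2 : t * (sigma_min B * Rintegral P setT (fun x => sqnorm (g x)))
    <= t * frob B (Emat P g g) by rewrite ler_wpM2l // /t; nra.
rewrite (_ : 2 * Num.sqrt 2 - 2 = 2 * t); last by rewrite /t; ring.
lra.
Qed.
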